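(* $z_{\mathrm{LC}}=z_D$, where $$z_{\mathrm{LC}}:=\inf\Big\{c^Tx+\sum_{s\in S}p_s\theta_s:\ (x,\theta_s)\in P_s(\mathbb{R}^n\times\mathbb{R}_+)\ \text{for all } s\in S\Big\}$$ (the infimum being over $x\in\mathbb{R}^n$ and $(\theta_s)_{s\in S}\in\mathbb{R}^S$), and $$z_D:=\sup\Big\{z(\lambda):\ \lambda=(\lambda^s)_{s\in S}\in(\mathbb{R}^n)^S,\ \sum_{s\in S}p_s\lambda^s=0\Big\},\qquad z(\lambda):=\sum_{s\in S}p_s\min_{(x^s,y^s)\in K^s}\big\{c^Tx^s+(q^s)^Ty^s+(\lambda^s)^Tx^s\big\}.$$
   Context: Two-stage stochastic integer program with finite scenario set $S$ and probabilities $p_s>0$, $\sum_{s\in S}p_s=1$. Data: $c\in\mathbb{R}^n$, matrix $A$ and vector $b$, and for each $s\in S$ matrices $T^s,W^s$ and vectors $h^s,q^s$ (all data rational). $X=\{x\in\mathbb{R}^n: x_j\in\mathbb{Z},\ j\in J_X\}$ and $Y=\{y\in\mathbb{R}^{n_y}: y_j\in\mathbb{Z},\ j\in J_Y\}$ for given index sets $J_X,J_Y$. For each $s$, $K^s:=\{(x,y)\in X\times Y: Ax\ge b,\ T^sx+W^sy\ge h^s\}$, assumed nonempty and bounded. Define $\overline{Q}_s^*:\mathbb{R}^n\times\mathbb{R}_+\to\mathbb{R}$ by $\overline{Q}_s^*(\pi,\pi_0)=\min\{\pi^Tx+\pi_0(q^s)^Ty:(x,y)\in K^s\}$. For $\Pi\subseteq\mathbb{R}^n\times\mathbb{R}_+$,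 $P_s(\Pi):=\{(x,\theta_s)\in\mathbb{R}^n\times\mathbb{R}:\ \pi^Tx+\pi_0\theta_s\ge\overline{Q}_s^*(\pi,\pi_0)\text{ for all }(\pi,\pi_0)\in\Pi\}$. *)

From HB Require Import structures.
From mathcomp Require Import all_boot all_order all_algebra.
From mathcomp Require Import boolp classical_sets reals ereal.
Set Implicit Arguments. Unset Strict Implicit. Unset Printing Implicit Defensive.
Import Order.TTheory GRing.Theory Num.Theory.
Local Open Scope ring_scope.
Local Open Scope classical_set_scope.

Record tssip (S : finType) (n ny : nat) := TSSIP {
  vc : 'cV[rat]_n;
  m1 : nat;
  mA : 'M[rat]_(m1, n);
  vb : 'cV[rat]_m1;
  m2 : S -> nat;
  mT : forall s, 'M[rat]_(m2 s, n);
  mW : forall s, 'M[rat]_(m2 s, ny);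
  vh : forall s, 'cV[rat]_(m2 s);
  vq : S -> 'cV[rat]_ny;
  JX : {set 'I_n};
  JY : {set 'I_ny}
}.

Section Defs.
Variables (R : realType) (S : finType) (n ny : nat) (D : tssip S n ny).

Definition rl (a b : nat) (M : 'M[rat]_(a, b)) : 'M[R]_(a, b) := map_mx ratr M.

Definition dot (k : nat) (u v : 'cV[R]_k) : R := \sum_(i < k) u i 0 * v i 0.

Definition vle (k : nat) (u v : 'cV[R]_k) : Prop := forall i, u i 0 <= v i 0.

Definition inX (x : 'cV[R]_n) : Prop := forall j, j \in JX D -> x j 0 \is a Num.int.
Definition inY (y : 'cV[R]_ny) : Prop := forall j, j \in JY D -> y j 0 \is a Num.int.

Definition Kset (s : S) : set ('cV[R]_n * 'cV[R]_ny) :=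
  [set xy | inX xy.1 /\ inY xy.2 /\ vle (rl (vb D)) (rl (mA D) *m xy.1) /\
            vle (rl (vh D s)) (rl (mT D s) *m xy.1 + rl (mW D s) *m xy.2)].

Definition Kbounded (s : S) : Prop :=
  exists M : R, forall xy, Kset s xy ->
    (forall i, `|xy.1 i 0| <= M) /\ (forall j, `|xy.2 j 0| <= M).

(* \overline{Q}_s^*(pi, pi0) = min over K^s (written as an infimum) *)
Definition Qbar (s : S) (pi : 'cV[R]_n) (pi0 : R) : \bar R :=
  ereal_inf [set (dot pi xy.1 + pi0 * dot (rl (vq D s)) xy.2)%:E | xy in Kset s].

Definition Pset (s : S) (Pi : set ('cV[R]_n * R)) : set ('cV[R]_n * R) :=
  [set xt | forall pp, Pi pp -> (Qbar s pp.1 pp.2 <= (dot pp.1 xt.1 + pp.2 * xt.2)%:E)%E].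

Definition PiAll : set ('cV[R]_n * R) := [set pp | 0 <= pp.2].

Definition zLC (p : S -> R) : \bar R :=
  ereal_inf [set (dot (rl (vc D)) xth.1 + \sum_(s : S) p s * xth.2 s)%:E
            | xth in [set xth : 'cV[R]_n * (S -> R) |
                      forall s, Pset s PiAll (xth.1, xth.2 s)]].

Definition zlam (p : S -> R) (lam : S -> 'cV[R]_n) : \bar R :=
  (\sum_(s : S) (p s)%:E *
     ereal_inf [set (dot (rl (vc D)) xy.1 + dot (rl (vq D s)) xy.2
                     + dot (lam s) xy.1)%:E | xy in Kset s])%E.

Definition zD (p : S -> R) : \bar R :=
  ereal_sup [set zlam p lam | lam in [set lam : S -> 'cV[R]_n |
                                       \sum_(s : S) p s *: lam s = 0]].
End Defs.
Arguments Kset R {S n ny} D s.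
Arguments Kbounded R {S n ny} D s.
Arguments zLC R {S n ny} D p.
Arguments zD R {S n ny} D p.

From HB Require Import structures.
From mathcomp Require Import all_boot all_order all_algebra.
From mathcomp Require Import boolp classical_sets reals ereal.
From mathcomp Require Import topology normedtype derive.
From mathcomp Require Import ring lra.
Set Implicit Arguments. Unset Strict Implicit. Unset Printing Implicit Defensive.
Import Order.TTheory GRing.Theory Num.Theory.
Import numFieldTopology.Exports numFieldNormedType.Exports.
Local Open Scope ring_scope.
Local Open Scope classical_set_scope.

(* z_D <= z_LC is weak duality: if sum_s p_s lambda^s = 0 and (x, theta) is
   feasible for z_LC, the inequality of P_s(R^n x R_+) with coefficient
   (c + lambda^s, 1) bounds the s-th Lagrangian subproblem by
   c'x + lambda^s'x + theta_s, and the lambda-terms cancel on averaging.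

   z_LC <= z_D follows from "z_D < r implies z_LC <= r".  Encode a candidate
   (theta_s, x^s)_s as a vector w in R^(S x (1+n)), and let C be the set of
   such w satisfying all inequalities defining P_s(R^n x R_+) plus a box big
   enough to contain every point built from the sets K^s: C is compact and
   convex.  A linear map L sends w to its expected cost together with the
   non-anticipativity residuals p_s (x^s - sum_t p_t x^t).  If L w = (r, 0)
   for some w in C, this w is a feasible point of z_LC of value r.  Otherwise
   the minimiser over C of the squared distance from L w to (r, 0) yields a
   separating functional (alpha, beta); after centring and rescaling, beta is
   a multiplier lambda with z(lambda) >= r, contradicting z_D < r. *)

(* If t (2P + tQ) >= 0 for all t in (0, 1] and Q >= 0, then P >= 0: the
   first-order condition at the minimum of a convex quadratic. *)
Lemma nonneg_of_small_quadratic (R : realFieldType) (P Q : R) : 0 <= Q ->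
  (forall t, 0 < t <= 1 -> 0 <= t * (2 * P + t * Q)) -> 0 <= P.
Proof.
move=> Q0 key; rewrite leNgt; apply/negP => Pneg.
have [Qe|Qn0] := eqVneq Q 0.
  by have := key 1; rewrite ltr01 lexx Qe => /(_ isT); nra.
have Qpos : 0 < Q by rewrite lt_def Qn0.
pose t := Num.min 1 (- P / Q).
have t0 : 0 < t by rewrite lt_min ltr01 divr_gt0 // oppr_gt0.
have t1 : t <= 1 by rewrite ge_min lexx.
have tQ : t * Q <= - P.
  have : t <= - P / Q by rewrite ge_min lexx orbT.
  by rewrite ler_pdivlMr.
by have := key t; rewrite t0 t1 => /(_ isT); nra.
Qed.

Lemma closed_ereal_ge (R : realType) (T : topologicalType) (b : \bar R) (f : T -> R) :
  continuous f -> closed [set v | (b <= (f v)%:E)%E].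
Proof.
move=> fc; case: b => [b| |].
- have -> : [set v | (b%:E <= (f v)%:E)%E] = f @^-1` [set x | b <= x].
    by apply/seteqP; split=> v /=; rewrite lee_fin.
  by apply: preimage_closed => //; exact: closed_ge.
- have -> : [set v | (+oo <= (f v)%:E)%E] = set0.
    by apply/seteqP; split=> v //=; rewrite leNgt ltey.
  exact: closed0.
- have -> : [set v | (-oo <= (f v)%:E)%E] = setT.
    by apply/seteqP; split=> v //= _; rewrite leNye.
  exact: closedT.
Qed.

Section Separation.
Variables (R : realType) (I : finType).
Local Notation N := #|I|.

(* Functions I -> R are identified with row vectors, whose topology we use;
   toF is a left inverse of ofF. *)
Definition toF (v : 'rV[R]_N) : I -> R := fun i => v ord0 (enum_rank i).
Definition ofF (w : I -> R) : 'rV[R]_N := \row_j w (enum_val j).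

Lemma ofFK : cancel ofF toF.
Proof. by move=> w; apply/funext => i; rewrite /toF /ofF mxE enum_rankK. Qed.

Lemma toF_continuous i : continuous (fun v : 'rV[R]_N => toF v i).
Proof. exact: (@coord_continuous R 1 N ord0 (enum_rank i)). Qed.

Lemma linear_form_continuous (a : I -> R) :
  continuous (fun v : 'rV[R]_N => \sum_i a i * toF v i).
Proof.
apply: continuous_big => [|i _ v]; first exact: add_continuous.
by apply: continuousM; [exact: cst_continuous | exact: toF_continuous].
Qed.

Lemma sum_segment (a u v : I -> R) t :
  \sum_i a i * (u i + t * (v i - u i)) =
  \sum_i a i * u i + t * (\sum_i a i * v i - \sum_i a i * u i).
Proof. by rewrite -sumrB mulr_sumr -big_split /=; apply: eq_bigr => i _; ring. Qed.

Definition segment_closed (C : set (I -> R)) : Prop :=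
  forall w0 w t, C w0 -> C w -> 0 <= t <= 1 -> C (fun i => w0 i + t * (w i - w0 i)).

Variables (K : Type) (A : K -> I -> R) (B : K -> \bar R) (bnd : I -> R).

Definition polybox (w : I -> R) : Prop :=
  (forall i, `|w i| <= bnd i) /\ (forall k, (B k <= (\sum_i A k i * w i)%:E)%E).

Lemma polybox_convex : segment_closed polybox.
Proof.
move=> w0 w t [b0 h0] [b1 h1] /andP[t0 t1]; split=> [i|k].
  have -> : w0 i + t * (w i - w0 i) = (1 - t) * w0 i + t * w i by ring.
  apply: le_trans (ler_normD _ _) _.
  rewrite !normrM (ger0_norm t0) ger0_norm ?subr_ge0 //.
  have := b0 i; have := b1 i; have := normr_ge0 (w i); have := normr_ge0 (w0 i).
  by move=> *; nra.
rewrite sum_segment; have := h0 k; have := h1 k.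
case: (B k) => [b| |] //=; rewrite ?lee_fin => Hb1 Hb0; last by rewrite leNye.
by nra.
Qed.

(* A closed subset of a product of segments. *)
Lemma polybox_compact : compact [set v : 'rV[R]_N | polybox (toF v)].
Proof.
pose Box := [set v : 'rV[R]_N |
  forall j, `[- bnd (enum_val j), bnd (enum_val j)]%classic (v ord0 j)].
apply: (@subclosed_compact _ _ Box).
- have -> : [set v : 'rV[R]_N | polybox (toF v)] =
      \bigcap_(i in [set: I]) ([set v | - bnd i <= toF v i] `&` [set v | toF v i <= bnd i])
      `&` \bigcap_(k in [set: K]) [set v | (B k <= (\sum_i A k i * toF v i)%:E)%E].
    apply/seteqP; split=> v /=.
      move=> [H1 H2]; split=> [i _|k _]; last exact: H2.
      by move: (H1 i); rewrite ler_norml => /andP[].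
    move=> [H1 H2]; split=> [i|k]; last exact: H2 k Logic.I.
    by rewrite ler_norml; have [? ?] := H1 i Logic.I; apply/andP; split.
  apply: closedI; last first.
    apply: closed_bigI => k _; exact: closed_ereal_ge (linear_form_continuous (a := A k)).
  apply: closed_bigI => i _; apply: closedI.
    by apply: (@preimage_closed _ _ (toF^~ i) [set x | - bnd i <= x]);
      [move=> x _; exact: toF_continuous | exact: closed_ge].
  by apply: (@preimage_closed _ _ (toF^~ i) [set x | x <= bnd i]);
    [move=> x _; exact: toF_continuous | exact: closed_le].
- apply: (@rV_compact R N (fun j => `[- bnd (enum_val j), bnd (enum_val j)]%classic)).
  by move=> j; exact: segment_compact.
- move=> v [H1 _] j /=; rewrite in_itv /= -ler_norml.
  by have := H1 (enum_val j); rewrite /toF enum_valK.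
Qed.

Lemma polybox_min (h : (I -> R) -> R) : continuous (h \o toF) ->
  (exists w, polybox w) ->
  exists2 w0, polybox w0 & forall w, polybox w -> h w0 <= h w.
Proof.
move=> hc [w1 Cw1].
have ne : [set v : 'rV[R]_N | polybox (toF v)] !=set0.
  by exists (ofF w1); rewrite /= ofFK.
have [v0 Cv0 v0min] := compact_EVT_min ne polybox_compact (continuous_subspaceT hc).
exists (toF v0); first by move: Cv0; rewrite inE.
by move=> w Cw; rewrite -(ofFK w); apply: v0min; rewrite inE /= ofFK.
Qed.

Variables (J : finType) (M : J -> I -> R) (z : J -> R).

Definition Lw (w : I -> R) (j : J) : R := \sum_i M j i * w i.
Definition sqdist (w : I -> R) : R := \sum_j (Lw w j - z j) * (Lw w j - z j).

Lemma sqdist_continuous : continuous (sqdist \o toF).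
Proof.
apply: continuous_big => [|j _ v]; first exact: add_continuous.
pose Ld u := Lw (toF u) j - z j.
have Lc : {for v, continuous Ld}.
  apply: (@continuousB R R^o _ (fun u => Lw (toF u) j) (fun=> z j) v).
    exact: linear_form_continuous.
  exact: cst_continuous.
exact: (@continuousM R _ Ld Ld v Lc Lc).
Qed.

Lemma sqdist_variational (C : set (I -> R)) w0 :
  segment_closed C -> C w0 -> (forall w, C w -> sqdist w0 <= sqdist w) ->
  forall w, C w -> 0 <= \sum_j (Lw w0 j - z j) * (Lw w j - Lw w0 j).
Proof.
move=> Cconv Cw0 w0min w Cw.
apply: (@nonneg_of_small_quadratic _ _
  (\sum_j (Lw w j - Lw w0 j) * (Lw w j - Lw w0 j))).
  by apply: sumr_ge0 => j _; rewrite -expr2 sqr_ge0.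
move=> t /andP[t0 t1].
have -> : t * (2 * (\sum_j (Lw w0 j - z j) * (Lw w j - Lw w0 j)) +
               t * \sum_j (Lw w j - Lw w0 j) * (Lw w j - Lw w0 j)) =
          sqdist (fun i => w0 i + t * (w i - w0 i)) - sqdist w0.
  rewrite /sqdist -sumrB mulrDr !mulrA !mulr_sumr -big_split /=.
  by apply: eq_bigr => j _; rewrite /Lw sum_segment -/(Lw w j) -/(Lw w0 j); ring.
by rewrite subr_ge0; apply: w0min; apply: Cconv => //; rewrite ltW.
Qed.

Lemma sqdist_min_separates (C : set (I -> R)) w0 :
  segment_closed C -> C w0 -> (forall w, C w -> sqdist w0 <= sqdist w) ->
  (exists j, Lw w0 j != z j) ->
  exists a : J -> R, exists2 d, 0 < d &
    forall w, C w -> \sum_j a j * z j + d <= \sum_j a j * Lw w j.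
Proof.
move=> Cconv Cw0 w0min [j0 hj0].
pose a j := Lw w0 j - z j.
exists a; exists (\sum_j a j * a j).
  rewrite (bigD1 j0) //=; apply: ltr_pwDl.
    by rewrite -expr2 exprn_even_gt0 // /a subr_eq0.
  by apply: sumr_ge0 => j _; rewrite -expr2 sqr_ge0.
move=> w Cw; have descent := sqdist_variational Cconv Cw0 w0min Cw.
have -> : \sum_j a j * Lw w j =
    \sum_j a j * z j + \sum_j a j * a j + \sum_j a j * (Lw w j - Lw w0 j).
  by rewrite -!big_split /=; apply: eq_bigr => j _; rewrite /a; ring.
by rewrite lerDl; exact: descent.
Qed.

Lemma polybox_separation : (exists w, polybox w) ->
  (forall w, polybox w -> exists j, Lw w j != z j) ->
  exists a : J -> R, exists2 d, 0 < d &
    forall w, polybox w -> \sum_j a j * z j + d <= \sum_j a j * Lw w j.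
Proof.
move=> ne hz; have [w0 Cw0 w0min] := polybox_min sqdist_continuous ne.
exact: sqdist_min_separates polybox_convex Cw0 w0min (hz w0 Cw0).
Qed.

End Separation.

Section DotProduct.
Variable (R : realType).

Lemma dotDl k (u v x : 'cV[R]_k) : dot (u + v) x = dot u x + dot v x.
Proof. by rewrite /dot -big_split /=; apply: eq_bigr => i _; rewrite mxE; ring. Qed.

Lemma dotZl k a (u x : 'cV[R]_k) : dot (a *: u) x = a * dot u x.
Proof. by rewrite /dot mulr_sumr; apply: eq_bigr => i _; rewrite mxE; ring. Qed.

Lemma dot_suml k (T : finType) (F : T -> 'cV[R]_k) x :
  dot (\sum_t F t) x = \sum_t dot (F t) x.
Proof.
by rewrite /dot exchange_big /=; apply: eq_bigr => i _; rewrite summxE mulr_suml.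
Qed.

Lemma dot0l k (x : 'cV[R]_k) : dot 0 x = 0.
Proof. by rewrite /dot big1 // => i _; rewrite mxE mul0r. Qed.

Lemma dot_norm_le k (u x : 'cV[R]_k) m : (forall i, `|x i 0| <= m) ->
  `|dot u x| <= (\sum_i `|u i 0|) * m.
Proof.
move=> hx; rewrite /dot mulr_suml; apply: le_trans (ler_norm_sum _ _ _) _.
by apply: ler_sum => i _; rewrite normrM; apply: ler_wpM2l.
Qed.

Lemma dot_lbound k (u x : 'cV[R]_k) m : (forall i, `|x i 0| <= m) ->
  - ((\sum_i `|u i 0|) * m) <= dot u x.
Proof. by move=> hx; apply: lerNnormlW; exact: dot_norm_le. Qed.

End DotProduct.

Lemma le_sum_norm (R : numDomainType) (T : finType) (F : T -> R) t :
  `|F t| <= \sum_u `|F u|.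
Proof. by rewrite (bigD1 t) //= lerDl; apply: sumr_ge0. Qed.

Lemma lee_of_levels (R : realType) (x y : \bar R) :
  (forall r : R, (y < r%:E)%E -> (x <= r%:E)%E) -> (x <= y)%E.
Proof.
move=> h; case: y h => [v| |] h; last 2 first.
- exact: leey.
- case: x h => [u| |] h //.
    by have := h (u - 1) (ltNyr _); rewrite lee_fin leNgt ltrBlDr ltrDl ltr01.
  by have := h 0 (ltNyr _).
apply/lee_addgt0Pr => e e0; rewrite -EFinD; apply: h.
by rewrite lte_fin ltrDl.
Qed.

Section Duality.
Variables (R : realType) (S : finType) (n ny : nat) (D : tssip S n ny) (p : S -> R).
Hypotheses (p_gt0 : forall s, 0 < p s) (p_sum1 : \sum_s p s = 1)
  (K_nonempty : forall s, Kset R D s !=set0).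

Local Notation c := (rl R (vc D)).
Local Notation q s := (rl R (vq D s)).
Local Notation Pair := ('cV[R]_n * 'cV[R]_ny)%type.

Lemma zlam_le (lam : S -> 'cV[R]_n) (x : 'cV[R]_n) (theta : S -> R) :
  \sum_s p s *: lam s = 0 -> (forall s, Pset D s (@PiAll R n) (x, theta s)) ->
  (zlam D p lam <= (dot c x + \sum_s p s * theta s)%:E)%E.
Proof.
move=> hlam hP; rewrite /zlam.
have scen s : (ereal_inf [set (dot c xy.1 + dot (q s) xy.2 + dot (lam s) xy.1)%:E
     | xy in Kset R D s] <= (dot c x + dot (lam s) x + theta s)%:E)%E.
  apply: (@le_trans _ _ (Qbar D s (c + lam s) 1)).
    apply: le_ereal_inf_tmp => _ [xy Kxy <-]; apply: ereal_inf_lbound.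
    by exists xy => //; rewrite dotDl mul1r; congr (_%:E); ring.
  by have := hP s (c + lam s, 1) ler01; rewrite /= dotDl mul1r.
apply: (@le_trans _ _ (\sum_s (p s)%:E * (dot c x + dot (lam s) x + theta s)%:E)%E).
  by apply: lee_sum => s _; apply: lee_wpmul2l => //; rewrite lee_fin ltW.
have lam_cancel : \sum_s p s * dot (lam s) x = 0.
  rewrite -[RHS](dot0l x) -hlam dot_suml.
  by apply: eq_bigr => s _; rewrite dotZl.
rewrite sumEFin lee_fin le_eqVlt; apply/orP; left; apply/eqP.
rewrite (eq_bigr (fun s => p s * dot c x + (p s * dot (lam s) x + p s * theta s)));
  last by move=> s _; ring.
by rewrite big_split big_split /= -mulr_suml p_sum1 mul1r lam_cancel add0r.
Qed.

Lemma zD_le_zLC : (zD R D p <= zLC R D p)%E.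
Proof.
apply: ge_ereal_sup => _ [lam hlam <-].
by apply: le_ereal_inf_tmp => _ [[x theta] hP <-]; exact: zlam_le.
Qed.

Definition scen_inf s (Phi : Pair -> R) : \bar R :=
  ereal_inf [set (Phi xy)%:E | xy in Kset R D s].

Lemma scen_inf_fin s Phi B : (forall xy, Kset R D s xy -> - B <= Phi xy) ->
  exists r, scen_inf s Phi = r%:E.
Proof.
move=> hB; have [xy0 K0] := K_nonempty s.
have lb : ((- B)%:E <= scen_inf s Phi)%E.
  by apply: le_ereal_inf_tmp => _ [xy Kxy <-]; rewrite lee_fin; exact: hB.
have ub : (scen_inf s Phi <= (Phi xy0)%:E)%E by apply: ereal_inf_lbound; exists xy0.
by move: lb ub; case: (scen_inf s Phi) => [r| |] //= _ _; exists r.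
Qed.

Lemma scen_inf_sum_ge (Phi : S -> Pair -> R) (g : R) :
  (forall s, exists B, forall xy, Kset R D s xy -> - B <= Phi s xy) ->
  (forall f : S -> Pair, (forall s, Kset R D s (f s)) ->
     g <= \sum_s p s * Phi s (f s)) ->
  (g%:E <= \sum_s (p s)%:E * scen_inf s (Phi s))%E.
Proof.
move=> hB hf.
have /choice [r hr] : forall s, exists r, scen_inf s (Phi s) = r%:E.
  by move=> s; have [B hB'] := hB s; exact: scen_inf_fin hB'.
have -> : (\sum_s (p s)%:E * scen_inf s (Phi s) = (\sum_s p s * r s)%:E)%E.
  by rewrite -sumEFin; apply: eq_bigr => s _; rewrite hr.
rewrite lee_fin leNgt; apply/negP => hlt.
pose eta := (g - \sum_s p s * r s) / 2.
have eta0 : 0 < eta by rewrite divr_gt0 // subr_gt0.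
have /choice [f hf'] : forall s, exists xy, Kset R D s xy /\ Phi s xy < r s + eta.
  move=> s; have : (scen_inf s (Phi s) < (r s + eta)%:E)%E by rewrite hr lte_fin ltrDl.
  by move=> /ereal_inf_lt [_ [xy Kxy <-]]; rewrite lte_fin => h; exists xy.
have near_inf : \sum_s p s * Phi s (f s) <= \sum_s p s * r s + eta.
  rewrite -[eta]mul1r -p_sum1 mulr_suml -big_split /=.
  apply: ler_sum => s _; rewrite -mulrDr; apply: ler_wpM2l; first exact: ltW.
  exact: ltW (hf' s).2.
by have := hf f (fun s => (hf' s).1); rewrite /eta in near_inf; lra.
Qed.

Lemma uniform_bound : (forall s, Kbounded R D s) ->
  exists m : R, 0 <= m /\ forall s xy, Kset R D s xy ->
    (forall i, `|xy.1 i 0| <= m) /\ (forall j, `|xy.2 j 0| <= m).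
Proof.
move=> /choice [Mf HM]; exists (\sum_s `|Mf s|); split; first exact: sumr_ge0.
have Mle s : Mf s <= \sum_s `|Mf s| by apply: le_trans (ler_norm _) (le_sum_norm _ _).
by move=> s xy /(HM s) [h1 h2]; split=> i; apply: le_trans (Mle s).
Qed.

Definition Idx := (S * 'I_n.+1)%type.
Definition th (w : Idx -> R) s : R := w (s, ord0).
Definition xs (w : Idx -> R) s : 'cV[R]_n := \col_k w (s, lift ord0 k).

(* Cuts: the inequalities pi'x^s + pi0 theta_s >= Qbar_s(pi, pi0) with pi0 >= 0. *)
Definition Cut := {pp : S * ('cV[R]_n * R) | 0 <= pp.2.2}.
Definition cutA (k : Cut) (i : Idx) : R :=
  if i.1 == (sval k).1 then
    (if unlift ord0 i.2 is Some j then (sval k).2.1 j 0 else (sval k).2.2) else 0.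
Definition cutB (k : Cut) : \bar R := Qbar D (sval k).1 (sval k).2.1 (sval k).2.2.

(* Rows of L: the expected cost, then the residuals p_s (x^s_k - E x_k). *)
Definition Row := ('I_1 + S * 'I_n)%type.
Definition Lmx (j : Row) (i : Idx) : R :=
  match j with
  | inl _ => p i.1 * (if unlift ord0 i.2 is Some k then c k 0 else 1)
  | inr sk => if unlift ord0 i.2 is Some k' then
                (if k' == sk.2 then p sk.1 * ((sk.1 == i.1)%:R - p i.1) else 0) else 0
  end.

Lemma sum_Idx (F : Idx -> R) :
  \sum_i F i = \sum_t (F (t, ord0) + \sum_k F (t, lift ord0 k)).
Proof.
rewrite (eq_bigr (fun i => F (i.1, i.2))); last by case.
rewrite -(pair_bigA _ (fun t o => F (t, o))) /=.
by apply: eq_bigr => t _; rewrite big_ord_recl.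
Qed.

Lemma sum_Row (F : Row -> R) :
  \sum_j F j = F (inl ord0) + \sum_s \sum_k F (inr (s, k)).
Proof.
rewrite big_sumType /= big_ord1; congr (_ + _).
rewrite (eq_bigr (fun i => F (inr (i.1, i.2)))); last by case.
by rewrite -(pair_bigA _ (fun s k => F (inr (s, k)))).
Qed.

Lemma cut_value k w : \sum_i cutA k i * w i =
  dot (sval k).2.1 (xs w (sval k).1) + (sval k).2.2 * th w (sval k).1.
Proof.
rewrite sum_Idx (bigD1 (sval k).1) //= [X in _ + X = _]big1 ?addr0; last first.
  move=> t /negbTE ht; rewrite /cutA /= (ifF _ _ ht) mul0r add0r big1 // => i _.
  by rewrite (ifF _ _ ht) mul0r.
rewrite /cutA /= eqxx unlift_none addrC; congr (_ + _).
by rewrite /dot; apply: eq_bigr => i _; rewrite liftK /xs mxE.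
Qed.

Lemma Lw_cost w : Lw Lmx w (inl ord0) = \sum_t p t * (th w t + dot c (xs w t)).
Proof.
rewrite /Lw sum_Idx; apply: eq_bigr => t _.
rewrite /Lmx /= unlift_none mulr1 mulrDr; congr (_ + _).
by rewrite /dot mulr_sumr; apply: eq_bigr => i _; rewrite liftK /= /xs !mxE; ring.
Qed.

Lemma Lw_residual w s k : Lw Lmx w (inr (s, k)) =
  p s * (xs w s k 0 - \sum_t p t * xs w t k 0).
Proof.
rewrite /Lw sum_Idx /Lmx /=.
rewrite (eq_bigr (fun t => p s * ((s == t)%:R * xs w t k 0) - p s * (p t * xs w t k 0)));
  last first.
  move=> t _; rewrite unlift_none mul0r add0r (bigD1 k) //= big1 ?addr0.
    by rewrite liftK eqxx /xs mxE; ring.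
  by move=> i /negbTE hi; rewrite liftK hi mul0r.
rewrite sumrB -!mulr_sumr mulrBr; congr (_ * _ - _).
rewrite (bigD1 s) //= eqxx mul1r big1 ?addr0 // => t.
by rewrite eq_sym => /negbTE ->; rewrite mul0r.
Qed.

Definition center (beta : S -> 'I_n -> R) s : 'cV[R]_n :=
  \col_k (beta s k - \sum_t p t * beta t k).

Lemma center_mean0 beta : \sum_s p s *: center beta s = 0.
Proof.
apply/matrixP => k j; rewrite summxE mxE.
rewrite (eq_bigr (fun s => p s * beta s k - p s * \sum_t p t * beta t k));
  last by move=> s _; rewrite !mxE; ring.
by rewrite sumrB -mulr_suml p_sum1 mul1r subrr.
Qed.

Lemma residual_pairing (beta : S -> 'I_n -> R) (w : Idx -> R) :
  \sum_s \sum_k beta s k * Lw Lmx w (inr (s, k)) =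
  \sum_s p s * dot (center beta s) (xs w s).
Proof.
pose X k := \sum_t p t * xs w t k 0; pose Bm k := \sum_t p t * beta t k.
rewrite (eq_bigr (fun s =>
    \sum_k p s * beta s k * xs w s k 0 - \sum_k p s * beta s k * X k)); last first.
  by move=> s _; rewrite -sumrB; apply: eq_bigr => k _; rewrite Lw_residual /X; ring.
rewrite [RHS](eq_bigr (fun s =>
    \sum_k p s * beta s k * xs w s k 0 - \sum_k p s * Bm k * xs w s k 0)); last first.
  move=> s _; rewrite /dot mulr_sumr -sumrB.
  by apply: eq_bigr => k _; rewrite mxE /Bm; ring.
rewrite !sumrB; congr (_ - _).
rewrite exchange_big [RHS]exchange_big; apply: eq_bigr => k _.
rewrite -mulr_suml [RHS](eq_bigr (fun s => Bm k * (p s * xs w s k 0)));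
  last by move=> s _; rewrite /Bm; ring.
by rewrite -mulr_sumr /X /Bm mulrC.
Qed.

Definition embed (f : S -> Pair) (i : Idx) : R :=
  if unlift ord0 i.2 is Some k then (f i.1).1 k 0 else dot (q i.1) (f i.1).2.

Lemma xs_embed f s : xs (embed f) s = (f s).1.
Proof. by apply/matrixP => k j; rewrite ord1 mxE /embed /= liftK. Qed.

Lemma th_embed f s : th (embed f) s = dot (q s) (f s).2.
Proof. by rewrite /th /embed /= unlift_none. Qed.

Section Bounded.
Variable m : R.
Hypotheses (m_ge0 : 0 <= m) (K_bounded : forall s xy, Kset R D s xy ->
  (forall i, `|xy.1 i 0| <= m) /\ (forall j, `|xy.2 j 0| <= m)).

Definition cb := \sum_i `|c i 0|.
Definition qb := \sum_s \sum_j `|q s j 0|.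

Lemma cb_ge0 : 0 <= cb. Proof. exact: sumr_ge0. Qed.
Lemma qb_ge0 : 0 <= qb. Proof. by apply: sumr_ge0 => s _; exact: sumr_ge0. Qed.
Lemma qb_ge s : \sum_j `|q s j 0| <= qb.
Proof. by rewrite /qb (bigD1 s) //= lerDl; apply: sumr_ge0 => t _; exact: sumr_ge0. Qed.

Lemma cost_lbound s xy : Kset R D s xy ->
  - ((cb + qb) * m) <= dot c xy.1 + dot (q s) xy.2.
Proof.
move=> /K_bounded [h1 h2].
have := dot_lbound c h1; have := dot_lbound (q s) h2.
by have := ler_wpM2r m_ge0 (qb_ge s); rewrite -/cb; lra.
Qed.

Definition lagr (lam : S -> 'cV[R]_n) s (xy : Pair) : R :=
  dot c xy.1 + dot (q s) xy.2 + dot (lam s) xy.1.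

Lemma zlam_ge (lam : S -> 'cV[R]_n) (g : R) :
  (forall f : S -> Pair, (forall s, Kset R D s (f s)) ->
     g <= \sum_s p s * lagr lam s (f s)) ->
  (g%:E <= zlam D p lam)%E.
Proof.
apply: scen_inf_sum_ge => s.
exists ((cb + qb) * m + (\sum_i `|lam s i 0|) * m) => xy Kxy.
have := cost_lbound Kxy; have := dot_lbound (lam s) (K_bounded Kxy).1.
by rewrite /lagr; lra.
Qed.

Section Level.
Variable r : R.

(* A bound on theta_s that is large enough for the case alpha <= 0. *)
Definition thbound := qb * m + `|r| + cb * m.
Definition bnd (i : Idx) : R := if i.2 == ord0 then thbound else m.
Definition target (j : Row) : R := if j is inl _ then r else 0.
Definition Cw := polybox cutA cutB bnd.

Lemma thbound_ge0 : 0 <= thbound.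
Proof.
have := mulr_ge0 qb_ge0 m_ge0; have := mulr_ge0 cb_ge0 m_ge0; have := normr_ge0 r.
by rewrite /thbound; lra.
Qed.

Lemma embed_in_C f : (forall s, Kset R D s (f s)) -> Cw (embed f).
Proof.
move=> hf; split.
  move=> [t o]; rewrite /bnd /embed /=.
  case: (unliftP ord0 o) => [k|] ->.
    by rewrite eq_sym (negbTE (neq_lift ord0 k)); exact: (K_bounded (hf t)).1.
  rewrite eqxx; apply: le_trans (dot_norm_le (q t) (K_bounded (hf t)).2) _.
  have := ler_wpM2r m_ge0 (qb_ge t); have := mulr_ge0 cb_ge0 m_ge0.
  by have := normr_ge0 r; rewrite /thbound; lra.
move=> k; rewrite cut_value xs_embed th_embed; apply: ereal_inf_lbound.
by exists (f (sval k).1) => //; exact: hf.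
Qed.

Lemma C_nonempty : exists w, Cw w.
Proof. by have [f hf] := choice K_nonempty; exists (embed f); exact: embed_in_C. Qed.

Lemma zLC_le_of_hit w : Cw w -> (forall j, Lw Lmx w j = target j) ->
  (zLC R D p <= r%:E)%E.
Proof.
move=> Cw_w heq.
pose x : 'cV[R]_n := \col_k \sum_t p t * xs w t k 0.
have xs_x s : xs w s = x.
  apply/matrixP => k j; rewrite ord1 [RHS]mxE.
  have := heq (inr (s, k)); rewrite Lw_residual /target => /eqP.
  by rewrite mulf_eq0 gt_eqF //= subr_eq0 => /eqP.
apply: (@le_trans _ _ (dot c x + \sum_s p s * th w s)%:E).
  apply: ereal_inf_lbound; exists (x, th w) => //= s [pi pi0] /= hpi0.
  by have := Cw_w.2 (exist _ (s, (pi, pi0)) hpi0); rewrite cut_value /= xs_x.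
rewrite lee_fin le_eqVlt; apply/orP; left; apply/eqP.
have := heq (inl ord0); rewrite Lw_cost /target => <-.
rewrite [RHS](eq_bigr (fun t => p t * th w t + p t * dot c x));
  last by move=> t _; rewrite xs_x mulrDr.
by rewrite big_split /= -mulr_suml p_sum1 mul1r addrC.
Qed.

(* A functional separating (r, 0) from L(C) by a margin d, written in
   scenario form: alpha weighs the expected cost, lambda the x^s. *)
Variables (alpha d : R) (lam : S -> 'cV[R]_n).
Hypothesis separates : forall w, Cw w ->
  alpha * r + d <= alpha * (\sum_t p t * (th w t + dot c (xs w t)))
                   + \sum_s p s * dot (lam s) (xs w s).

Lemma separates_embed f : (forall s, Kset R D s (f s)) ->
  alpha * r + d <= alpha * (\sum_s p s * (dot c (f s).1 + dot (q s) (f s).2))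
                   + \sum_s p s * dot (lam s) (f s).1.
Proof.
move=> hf; have := separates (embed_in_C hf).
have -> : \sum_t p t * (th (embed f) t + dot c (xs (embed f) t)) =
          \sum_s p s * (dot c (f s).1 + dot (q s) (f s).2).
  by apply: eq_bigr => t _; rewrite xs_embed th_embed addrC.
have -> // : \sum_s p s * dot (lam s) (xs (embed f) s) = \sum_s p s * dot (lam s) (f s).1.
by apply: eq_bigr => s _; rewrite xs_embed.
Qed.

Lemma sum_lagr_scale (a : R) f :
  \sum_s p s * lagr (fun s => a *: lam s) s (f s) =
  \sum_s p s * (dot c (f s).1 + dot (q s) (f s).2) + a * \sum_s p s * dot (lam s) (f s).1.
Proof.
by rewrite mulr_sumr -big_split; apply: eq_bigr => s _; rewrite /lagr dotZl /=; ring.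
Qed.

Lemma zlam_ge_pos : 0 < alpha -> 0 <= d ->
  (r%:E <= zlam D p (fun s => alpha^-1 *: lam s))%E.
Proof.
move=> apos d0; apply: zlam_ge => f hf; rewrite sum_lagr_scale.
have := separates_embed hf => sep_f.
by rewrite -(ler_pM2l apos) mulrDr mulrA mulfV ?gt_eqF // mul1r; lra.
Qed.

(* Case alpha <= 0: raising every theta_s to its bound shows that lambda
   alone separates, uniformly over C. *)
Lemma lam_separates : alpha <= 0 ->
  forall w, Cw w -> d <= \sum_s p s * dot (lam s) (xs w s).
Proof.
move=> aneg w Cw_w.
pose w' (i : Idx) := if i.2 == ord0 then thbound else w i.
have xs' s : xs w' s = xs w s by apply/matrixP => k j; rewrite !mxE /w' /=.
have th' s : th w' s = thbound by rewrite /th /w' /=.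
have Cw' : Cw w'.
  split.
    move=> [t o]; have := Cw_w.1 (t, o); rewrite /w' /bnd /=.
    by case: (o == ord0) => // _; rewrite ger0_norm // thbound_ge0.
  move=> k; apply: le_trans (Cw_w.2 k) _; rewrite !cut_value xs' th' lee_fin lerD2l.
  apply: ler_wpM2l; first exact: (svalP k).
  by apply: le_trans (ler_norm _) _; have := Cw_w.1 ((sval k).1, ord0); rewrite /bnd.
have cost_ge : r <= \sum_t p t * (th w' t + dot c (xs w' t)).
  rewrite -[X in X <= _]mul1r -p_sum1 mulr_suml; apply: ler_sum => t _.
  apply: ler_wpM2l; first exact: ltW.
  have hb i : `|xs w t i 0| <= m by have := Cw_w.1 (t, lift ord0 i); rewrite /bnd /= mxE.
  rewrite th' xs'; have := dot_lbound c hb; rewrite /thbound -/cb.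
  by have := ler_norm r; have := mulr_ge0 qb_ge0 m_ge0; lra.
have pair : \sum_s p s * dot (lam s) (xs w' s) = \sum_s p s * dot (lam s) (xs w s).
  by apply: eq_bigr => s _; rewrite xs'.
by have := separates Cw'; have := ler_wnM2l aneg cost_ge; rewrite pair; lra.
Qed.

Lemma zlam_ge_nonpos : alpha <= 0 -> 0 < d ->
  (r%:E <= zlam D p (fun s => ((`|r| + (cb + qb) * m) / d) *: lam s))%E.
Proof.
move=> aneg d0; set t := (_ / d).
have Bge0 : 0 <= `|r| + (cb + qb) * m.
  by have := mulr_ge0 (addr_ge0 cb_ge0 qb_ge0) m_ge0; have := normr_ge0 r; lra.
have t0 : 0 <= t by apply: divr_ge0; last exact: ltW.
have td : t * d = `|r| + (cb + qb) * m by rewrite /t mulfVK // gt_eqF.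
apply: zlam_ge => f hf; rewrite sum_lagr_scale.
have pair : \sum_s p s * dot (lam s) (xs (embed f) s) = \sum_s p s * dot (lam s) (f s).1.
  by apply: eq_bigr => s _; rewrite xs_embed.
have := lam_separates aneg (embed_in_C hf).
rewrite pair => /(ler_wpM2l t0); rewrite td => h.
have : - ((cb + qb) * m) <= \sum_s p s * (dot c (f s).1 + dot (q s) (f s).2).
  rewrite -[X in X <= _]mul1r -p_sum1 mulr_suml; apply: ler_sum => s _.
  by apply: ler_wpM2l; [exact: ltW | exact: cost_lbound].
by have := ler_norm r; lra.
Qed.

End Level.

Lemma zLC_le_level (r : R) : (zD R D p < r%:E)%E -> (zLC R D p <= r%:E)%E.
Proof.
move=> hD; rewrite leNgt; apply/negP => hLC.
have not_ge lam' : \sum_s p s *: lam' s = 0 -> ~ (r%:E <= zlam D p lam')%E.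
  move=> h0 hr; have : (zlam D p lam' <= zD R D p)%E.
    by apply: ereal_sup_ubound; exists lam'.
  by move=> /(le_trans hr) /(lt_le_trans hD); rewrite ltxx.
have scaled_mean0 a beta : \sum_s p s *: (a *: center beta s) = 0.
  under eq_bigr => s _ do rewrite scalerA mulrC -scalerA.
  by rewrite -scaler_sumr center_mean0 scaler0.
have miss w : Cw r w -> exists j, Lw Lmx w j != target r j.
  move=> Cw_w; apply/not_existsP => heq.
  have hit j : Lw Lmx w j = target r j by apply/eqP/negPn/negP; exact: heq.
  by have := zLC_le_of_hit Cw_w hit; rewrite leNgt hLC.
have [a [d d0 hsep]] := polybox_separation (C_nonempty r) miss.
pose beta s k := a (inr (s, k)).
have sep w : Cw r w -> a (inl ord0) * r + d <=
    a (inl ord0) * (\sum_t p t * (th w t + dot c (xs w t)))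
    + \sum_s p s * dot (center beta s) (xs w s).
  move=> Cw_w; have := hsep w Cw_w.
  rewrite !sum_Row /target -Lw_cost residual_pairing.
  by rewrite big1 ?addr0 // => s _; rewrite big1 // => k _; rewrite mulr0.
have [apos|aneg] := ltrP 0 (a (inl ord0)).
  exact: not_ge (scaled_mean0 _ _) (zlam_ge_pos sep apos (ltW d0)).
exact: not_ge (scaled_mean0 _ _) (zlam_ge_nonpos sep aneg d0).
Qed.

End Bounded.

End Duality.

Theorem theorem2 (R : realType) (S : finType) (n ny : nat) (D : tssip S n ny)
  (p : S -> R) :
  (forall s, 0 < p s) -> \sum_(s : S) p s = 1 ->
  (forall s, Kset R D s !=set0) -> (forall s, Kbounded R D s) ->
  zLC R D p = zD R D p.
Proof.
move=> p_gt0 p_sum1 K_nonempty K_bounded.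
apply/eqP; rewrite eq_le; apply/andP; split; last exact: zD_le_zLC.
have [m [m_ge0 hm]] := uniform_bound K_bounded.
by apply: lee_of_levels => r; exact: (zLC_le_level p_gt0 p_sum1 K_nonempty m_ge0 hm).
Qed.
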